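(* Let $r\ge 1$ and $K\ge1$ be integers, $\beta_1,\beta_2>0$, $\theta_1,\theta_2>0$ and $\alpha>0$. Let $\zeta=(1,0,0)$, $\eta=(0,0,1)$, $v=(0,0,1)$, $v'=(0,1,0)$, and for $i=1,\dots,r$ let $k_i=2^{i-1}K\zeta\in\mathbb{Z}^3$ and $k_i'=k_i+\eta$. Define \[ u_0(x)=r^{-\beta_1}\sum_{i=1}^r|k_i|^{\theta_1}v\cos(k_i\cdot x),\qquad b_0(x)=r^{-\beta_2}\sum_{i=1}^r|k_i'|^{\theta_2}v'\cos(k_i'\cdot x). \] Then for all $t>0$, \[ \|e^{-t(-\Delta)^{\alpha}}u_0\|_{L^\infty}\lesssim r^{-\beta_1}t^{-\frac{\theta_1}{2\alpha}},\qquad \|e^{-t(-\Delta)^{\alpha}}b_0\|_{L^\infty}\lesssim r^{-\beta_2}t^{-\frac{\theta_2}{2\alpha}}, \] with implicit constants independent of $r$, $K$ and $t$.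
   Context: $e^{-t(-\Delta)^\alpha}$ denotes the fractional heat semigroup, i.e. the Fourier multiplier $e^{-t|\xi|^{2\alpha}}$; in particular $e^{-t(-\Delta)^\alpha}\big(w\cos(k\cdot x)\big)=e^{-|k|^{2\alpha}t}w\cos(k\cdot x)$. *)

From Stdlib Require Import Reals List.
Open Scope R_scope.

(* Vectors in R^3 (also used for wave vectors in Z^3 embedded in R^3). *)
Definition vec3 : Type := (R * R * R)%type.

Definition dot3 (a b : vec3) : R :=
  let '(a1, a2, a3) := a in let '(b1, b2, b3) := b in a1 * b1 + a2 * b2 + a3 * b3.
Definition norm3 (a : vec3) : R := sqrt (dot3 a a).
Definition scal3 (c : R) (a : vec3) : vec3 :=
  let '(a1, a2, a3) := a in (c * a1, c * a2, c * a3).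
Definition add3 (a b : vec3) : vec3 :=
  let '(a1, a2, a3) := a in let '(b1, b2, b3) := b in (a1 + b1, a2 + b2, a3 + b3).
Definition zero3 : vec3 := (0, 0, 0).

(* A finite cosine sum  x |-> sum_j w_j cos(k_j . x), stored as a list of
   pairs (w_j, k_j) (amplitude vector, wave vector). *)
Definition cos_sum : Type := list (vec3 * vec3).

Definition eval_cos_sum (L : cos_sum) (x : vec3) : vec3 :=
  fold_right (fun p acc => add3 (scal3 (cos (dot3 (snd p) x)) (fst p)) acc) zero3 L.

(* Fractional heat semigroup e^{-t(-Delta)^alpha}: Fourier multiplier
   e^{-t|xi|^{2 alpha}}, acting on  w cos(k.x)  as multiplication by
   e^{-|k|^{2 alpha} t}. *)
Definition frac_heat (alpha t : R) (L : cos_sum) : cos_sum :=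
  map (fun p => (scal3 (exp (- (Rpower (norm3 (snd p)) (2 * alpha)) * t)) (fst p), snd p)) L.

Definition zeta : vec3 := (1, 0, 0).
Definition eta  : vec3 := (0, 0, 1).
Definition vv   : vec3 := (0, 0, 1).
Definition vv'  : vec3 := (0, 1, 0).

Definition kk (K i : nat) : vec3 := scal3 (2 ^ (i - 1) * INR K) zeta.
Definition kk' (K i : nat) : vec3 := add3 (kk K i) eta.

Definition u0 (r K : nat) (beta1 theta1 : R) : cos_sum :=
  map (fun i => (scal3 (Rpower (INR r) (- beta1) * Rpower (norm3 (kk K i)) theta1) vv, kk K i))
      (seq 1 r).

Definition b0 (r K : nat) (beta2 theta2 : R) : cos_sum :=
  map (fun i => (scal3 (Rpower (INR r) (- beta2) * Rpower (norm3 (kk' K i)) theta2) vv', kk' K i))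
      (seq 1 r).

(* After the semigroup, the i-th coefficient is  c |k_i|^θ e^{-t|k_i|^{2α}}.
   Writing  s = t|k_i|^{2α}  and  X_i = s^g = t^g |k_i|^θ  with  g = θ/(2α),
   it equals  c t^{-g} X_i e^{-s} <= c t^{-g} A X_i/(1+X_i)^2,  because
   e^{-s}(1+s^g)^2 is bounded by a constant A depending only on g.  The wave
   vectors are lacunary, |k_{i+1}| >= √2 |k_i|, so X_{i+1} >= p X_i with
   p = √2^θ > 1, and the sum of X/(1+X)^2 along such a sequence is at most
   p/(p-1) whatever its length: this telescopes against p/(p-1) · 1/(1+X_i). *)
From Stdlib Require Import Reals List Lra Lia Psatz.
Open Scope R_scope.

Lemma Rpower_pos (x y : R) : 0 < Rpower x y.
Proof. apply exp_pos. Qed.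

Lemma Rpower_exp (u g : R) : Rpower (exp u) g = exp (g * u).
Proof. unfold Rpower; now rewrite ln_exp. Qed.

Lemma Rpower_gt1 (q th : R) : 1 < q -> 0 < th -> 1 < Rpower q th.
Proof.
  intros Hq Hth. rewrite <- (Rpower_O q) at 1 by lra. apply Rpower_lt; lra.
Qed.

Definition lsum (f : nat -> R) (l : list nat) : R :=
  fold_right (fun i acc => f i + acc) 0 l.

Lemma lsum_le (f g : nat -> R) (l : list nat) :
  (forall i, In i l -> f i <= g i) -> lsum f l <= lsum g l.
Proof.
  intros H; induction l as [|i l IH]; simpl; [lra|].
  apply Rplus_le_compat; [apply H | apply IH]; simpl; auto.
  intros j Hj; apply H; simpl; auto.
Qed.

Lemma lsum_scal_l (c : R) (f : nat -> R) (l : list nat) :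
  lsum (fun i => c * f i) l = c * lsum f l.
Proof. induction l as [|i l IH]; simpl; [ring|]. rewrite IH; ring. Qed.

Lemma Rabs_lsum_le (f : nat -> R) (l : list nat) :
  Rabs (lsum f l) <= lsum (fun i => Rabs (f i)) l.
Proof.
  induction l as [|i l IH]; simpl.
  - rewrite Rabs_R0; lra.
  - eapply Rle_trans; [apply Rabs_triang|]. lra.
Qed.

(** * Sums along lacunary sequences *)

Lemma lacunary_telescope_step (p x y : R) : 1 < p -> 0 < x -> p * x <= y ->
  x / (1 + x)^2 + p / (p - 1) / (1 + y) <= p / (p - 1) / (1 + x).
Proof.
  intros Hp Hx Hy.
  assert (Hnum : 0 <= p * (1 + x) * (y - x) - (p - 1) * x * (1 + y)).
  { replace (p * (1 + x) * (y - x) - (p - 1) * x * (1 + y))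
      with (x * (p - 1)^2 + (y - p * x) * (p + x)) by ring.
    apply Rplus_le_le_0_compat; apply Rmult_le_pos; nra. }
  assert (Hden : 0 < (p - 1) * (1 + x)^2 * (1 + y)).
  { apply Rmult_lt_0_compat; [apply Rmult_lt_0_compat|]; nra. }
  assert (Hdiff : p / (p - 1) / (1 + x) - (x / (1 + x)^2 + p / (p - 1) / (1 + y))
     = (p * (1 + x) * (y - x) - (p - 1) * x * (1 + y)) / ((p - 1) * (1 + x)^2 * (1 + y))).
  { field; repeat split; nra. }
  assert (0 <= (p * (1 + x) * (y - x) - (p - 1) * x * (1 + y))
               / ((p - 1) * (1 + x)^2 * (1 + y))).
  { apply Rmult_le_pos; [lra | apply Rlt_le, Rinv_0_lt_compat; lra]. }
  lra.
Qed.

Lemma lsum_lacunary_le_telescope (X : nat -> R) (p : R) (m : nat) : 1 < p ->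
  (forall i, (m <= i)%nat -> 0 < X i) ->
  (forall i, (m <= i)%nat -> p * X i <= X (S i)) ->
  forall n, lsum (fun i => X i / (1 + X i)^2) (seq m n) <= p / (p - 1) / (1 + X m).
Proof.
  intros Hp HX HXS n. revert m HX HXS.
  induction n as [|n IH]; intros m HX HXS; simpl.
  - assert (0 < X m) by (apply HX; lia).
    apply Rlt_le, Rdiv_lt_0_compat; [apply Rdiv_lt_0_compat|]; lra.
  - eapply Rle_trans.
    + apply Rplus_le_compat_l, IH; intros i Hi; [apply HX | apply HXS]; lia.
    + apply lacunary_telescope_step; [| apply HX | apply HXS]; auto.
Qed.

Lemma lsum_lacunary_le (X : nat -> R) (p : R) (m n : nat) : 1 < p ->
  (forall i, (m <= i)%nat -> 0 < X i) ->
  (forall i, (m <= i)%nat -> p * X i <= X (S i)) ->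
  lsum (fun i => X i / (1 + X i)^2) (seq m n) <= p / (p - 1).
Proof.
  intros Hp HX HXS.
  eapply Rle_trans; [apply lsum_lacunary_le_telescope; eauto|].
  assert (0 < X m) by (apply HX; lia).
  assert (0 < p / (p - 1)) by (apply Rdiv_lt_0_compat; lra).
  unfold Rdiv at 1. rewrite <- (Rmult_1_r (p / (p - 1))) at 2.
  apply Rmult_le_compat_l; [lra|].
  rewrite <- Rinv_1. apply Rinv_le_contravar; lra.
Qed.

(** * Damping by the fractional heat kernel *)

Definition damping_const (g : R) : R := (1 + Rpower (2 * g) g)^2.

(* Split  s^g = (2g)^g (s/(2g))^g  and use  1 + u <= e^u  on  u = s/(2g). *)
Lemma one_add_Rpower_le_exp (s g : R) : 0 < s -> 0 < g ->
  1 + Rpower s g <= (1 + Rpower (2 * g) g) * exp (s / 2).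
Proof.
  intros Hs Hg.
  set (u := s / (2 * g)).
  assert (Hu : 0 < u) by (apply Rdiv_lt_0_compat; lra).
  assert (Hsplit : Rpower s g = Rpower (2 * g) g * Rpower u g).
  { rewrite Rpower_mult_distr by lra. f_equal. unfold u. field. lra. }
  assert (Hu_exp : Rpower u g <= exp (s / 2)).
  { replace (s / 2) with (g * u) by (unfold u; field; lra).
    rewrite <- Rpower_exp. apply Rle_Rpower_l; [lra|].
    split; [lra|]. pose proof (exp_ineq1_le u); lra. }
  assert (Hexp : 1 <= exp (s / 2)) by (pose proof (exp_ineq1_le (s / 2)); lra).
  pose proof (Rpower_pos (2 * g) g). pose proof (Rpower_pos u g).
  rewrite Hsplit. nra.
Qed.

Lemma exp_neg_le_damping (s g : R) : 0 < s -> 0 < g ->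
  exp (- s) <= damping_const g / (1 + Rpower s g)^2.
Proof.
  intros Hs Hg.
  pose proof (one_add_Rpower_le_exp s g Hs Hg) as Hle.
  pose proof (Rpower_pos s g).
  assert (Hsq : (1 + Rpower s g)^2 <= damping_const g * exp s).
  { replace (damping_const g * exp s) with (((1 + Rpower (2 * g) g) * exp (s / 2))^2).
    - apply pow_incr; lra.
    - unfold damping_const. simpl. rewrite !Rmult_1_r.
      replace (exp s) with (exp (s / 2) * exp (s / 2))
        by (rewrite <- exp_plus; f_equal; field).
      ring. }
  assert (Hpos : 0 < (1 + Rpower s g)^2) by nra.
  apply (Rmult_le_reg_r ((1 + Rpower s g)^2)); [exact Hpos|].
  unfold Rdiv. rewrite Rmult_assoc, Rinv_l, Rmult_1_r by lra.
  pose proof (exp_pos (- s)).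
  replace (damping_const g) with (exp (- s) * (damping_const g * exp s)).
  - apply Rmult_le_compat_l; lra.
  - rewrite Rmult_comm, Rmult_assoc, <- exp_plus.
    replace (s + - s) with 0 by ring. rewrite exp_0. ring.
Qed.

Lemma Rpower_heat_scaling (al th N t : R) : 0 < al -> 0 < N -> 0 < t ->
  Rpower (Rpower N (2 * al) * t) (th / (2 * al)) = Rpower N th * Rpower t (th / (2 * al)).
Proof.
  intros Hal HN Ht.
  rewrite <- Rpower_mult_distr by (try apply Rpower_pos; lra).
  rewrite Rpower_mult. do 2 f_equal. field. lra.
Qed.

Lemma heat_damped_power_le (al th N t : R) : 0 < al -> 0 < th -> 0 < N -> 0 < t ->
  let g := th / (2 * al) in
  let X := Rpower N th * Rpower t g in
  exp (- Rpower N (2 * al) * t) * Rpower N th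
    <= damping_const g * Rpower t (- g) * (X / (1 + X)^2).
Proof.
  intros Hal Hth HN Ht g X.
  assert (Hg : 0 < g) by (apply Rdiv_lt_0_compat; lra).
  assert (Hs : 0 < Rpower N (2 * al) * t)
    by (apply Rmult_lt_0_compat; [apply Rpower_pos | lra]).
  pose proof (exp_neg_le_damping _ g Hs Hg) as Hexp.
  unfold g in Hexp. rewrite Rpower_heat_scaling in Hexp by lra. fold g X in Hexp.
  assert (HN_th : Rpower N th = Rpower t (- g) * X).
  { unfold X. rewrite (Rmult_comm (Rpower N th)), <- Rmult_assoc, <- Rpower_plus.
    replace (- g + g) with 0 by ring. rewrite Rpower_O by lra. ring. }
  assert (0 <= Rpower t (- g) * X).
  { rewrite <- HN_th. apply Rlt_le, Rpower_pos. }
  replace (- Rpower N (2 * al) * t) with (- (Rpower N (2 * al) * t)) by ring.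
  rewrite HN_th.
  apply Rle_trans with (damping_const g / (1 + X)^2 * (Rpower t (- g) * X)).
  - apply Rmult_le_compat_r; assumption.
  - right. unfold Rdiv. ring.
Qed.

Lemma eval_frac_heat_map (al t : R) (a : nat -> R) (k : nat -> vec3) (w : vec3)
    (l : list nat) (x : vec3) :
  eval_cos_sum (frac_heat al t (map (fun i => (scal3 (a i) w, k i)) l)) x =
  scal3 (lsum (fun i => cos (dot3 (k i) x)
                        * (exp (- Rpower (norm3 (k i)) (2 * al) * t) * a i)) l) w.
Proof.
  destruct w as [[w1 w2] w3].
  induction l as [|i l IH]; unfold eval_cos_sum, frac_heat, lsum in *;
    cbn [map fold_right fst snd].
  - unfold zero3, scal3. f_equal; [f_equal|]; ring.
  - rewrite IH. unfold scal3, add3. f_equal; [f_equal|]; ring.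
Qed.

Lemma norm3_scal3 (a : R) (w : vec3) : norm3 (scal3 a w) = Rabs a * norm3 w.
Proof.
  destruct w as [[w1 w2] w3]. unfold norm3, scal3, dot3.
  rewrite <- sqrt_Rsqr_abs, <- sqrt_mult_alt by apply Rle_0_sqr.
  f_equal. unfold Rsqr. ring.
Qed.

Definition heat_lacunary_const (al th q : R) : R :=
  damping_const (th / (2 * al)) * (Rpower q th / (Rpower q th - 1)).

Lemma heat_lacunary_const_pos (al th q : R) : 1 < q -> 0 < th ->
  0 < heat_lacunary_const al th q.
Proof.
  intros Hq Hth. pose proof (Rpower_gt1 q th Hq Hth).
  pose proof (Rpower_pos (2 * (th / (2 * al))) (th / (2 * al))).
  apply Rmult_lt_0_compat.
  - unfold damping_const. nra.
  - apply Rdiv_lt_0_compat; lra.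
Qed.

Lemma Rabs_cos_heat_term_le (al th c t N y : R) :
  0 < al -> 0 < th -> 0 < N -> 0 < t -> 0 <= c ->
  let g := th / (2 * al) in
  let X := Rpower N th * Rpower t g in
  Rabs (cos y * (exp (- Rpower N (2 * al) * t) * (c * Rpower N th)))
    <= c * damping_const g * Rpower t (- g) * (X / (1 + X)^2).
Proof.
  intros Hal Hth HN Ht Hc g X.
  pose proof (heat_damped_power_le al th N t Hal Hth HN Ht) as Hdamp; cbv zeta in Hdamp.
  fold g X in Hdamp.
  pose proof (COS_bound y).
  set (e := exp (- Rpower N (2 * al) * t)) in *.
  assert (He : 0 <= e * Rpower N th).
  { apply Rmult_le_pos; apply Rlt_le; [apply exp_pos | apply Rpower_pos]. }
  replace (e * (c * Rpower N th)) with (c * (e * Rpower N th)) by ring.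
  rewrite Rabs_mult, Rabs_mult, (Rabs_right c), (Rabs_right (e * _)) by lra.
  assert (Rabs (cos y) <= 1) by (apply Rabs_le; lra).
  apply Rle_trans with (c * (e * Rpower N th)).
  - rewrite <- (Rmult_1_l (c * _)) at 2.
    apply Rmult_le_compat_r; [apply Rmult_le_pos|]; assumption.
  - rewrite !Rmult_assoc. apply Rmult_le_compat_l; [lra|].
    rewrite <- Rmult_assoc. exact Hdamp.
Qed.

Lemma Rpower_lacunary (q th N N' T : R) : 1 < q -> 0 <= th -> 0 < N -> 0 < T ->
  q * N <= N' -> Rpower q th * (Rpower N th * T) <= Rpower N' th * T.
Proof.
  intros Hq Hth HN HT HN'.
  rewrite <- Rmult_assoc. apply Rmult_le_compat_r; [lra|].
  rewrite Rpower_mult_distr by lra.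
  apply Rle_Rpower_l; [lra|]. split; [apply Rmult_lt_0_compat|]; lra.
Qed.

Lemma frac_heat_lacunary_le (al th q c t : R) (w : vec3) (k : nat -> vec3)
    (m n : nat) (x : vec3) :
  0 < al -> 0 < th -> 1 < q -> 0 < t -> 0 <= c ->
  (forall i, (m <= i)%nat -> 0 < norm3 (k i)) ->
  (forall i, (m <= i)%nat -> q * norm3 (k i) <= norm3 (k (S i))) ->
  norm3 (eval_cos_sum (frac_heat al t
           (map (fun i => (scal3 (c * Rpower (norm3 (k i)) th) w, k i)) (seq m n))) x)
    <= heat_lacunary_const al th q * c * norm3 w * Rpower t (- (th / (2 * al))).
Proof.
  intros Hal Hth Hq Ht Hc Hk Hlac.
  rewrite eval_frac_heat_map, norm3_scal3.
  set (g := th / (2 * al)).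
  set (X := fun i => Rpower (norm3 (k i)) th * Rpower t g).
  set (p := Rpower q th).
  set (sum := lsum _ (seq m n)).
  assert (Hsum : Rabs sum <= c * damping_const g * Rpower t (- g) * (p / (p - 1))).
  { eapply Rle_trans; [apply Rabs_lsum_le|].
    apply Rle_trans with
      (lsum (fun i => c * damping_const g * Rpower t (- g) * (X i / (1 + X i)^2)) (seq m n)).
    - apply lsum_le. intros i Hi. apply in_seq in Hi.
      apply Rabs_cos_heat_term_le; [lra | lra | apply Hk; lia | lra | lra].
    - rewrite !lsum_scal_l.
      pose proof (Rpower_pos t (- g)).
      assert (0 <= damping_const g) by apply pow2_ge_0.
      apply Rmult_le_compat_l; [apply Rmult_le_pos; [apply Rmult_le_pos|]; lra|].
      apply lsum_lacunary_le; [apply Rpower_gt1; lra | |].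
      + intros i Hi. apply Rmult_lt_0_compat; apply Rpower_pos.
      + intros i Hi. apply Rpower_lacunary; auto; try lra. apply Rpower_pos. }
  pose proof (Rabs_pos sum). pose proof (sqrt_pos (dot3 w w)). fold (norm3 w) in *.
  unfold heat_lacunary_const. fold g p.
  replace (damping_const g * (p / (p - 1)) * c * norm3 w * Rpower t (- g))
    with (c * damping_const g * Rpower t (- g) * (p / (p - 1)) * norm3 w) by ring.
  apply Rmult_le_compat_r; assumption.
Qed.

Lemma sqrt2_gt1 : 1 < sqrt 2.
Proof. rewrite <- sqrt_1. apply sqrt_lt_1_alt. lra. Qed.

Lemma norm3_vv : norm3 vv = 1.
Proof. unfold norm3, vv, dot3. replace (0 * 0 + 0 * 0 + 1 * 1) with 1 by ring. apply sqrt_1. Qed.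

Lemma norm3_vv' : norm3 vv' = 1.
Proof. unfold norm3, vv', dot3. replace (0 * 0 + 1 * 1 + 0 * 0) with 1 by ring. apply sqrt_1. Qed.

Lemma kk_coef_ge1 (K i : nat) : (1 <= K)%nat -> 1 <= 2 ^ (i - 1) * INR K.
Proof.
  intros HK. assert (1 <= INR K) by (apply (le_INR 1); exact HK).
  assert (1 <= 2 ^ (i - 1)) by (apply pow_R1_Rle; lra). nra.
Qed.

Lemma kk_coef_S (K i : nat) : (1 <= i)%nat ->
  2 ^ (S i - 1) * INR K = 2 * (2 ^ (i - 1) * INR K).
Proof.
  intros Hi. replace (S i - 1)%nat with (S (i - 1)) by lia. simpl. ring.
Qed.

Lemma norm3_kk (K i : nat) : (1 <= K)%nat -> norm3 (kk K i) = 2 ^ (i - 1) * INR K.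
Proof.
  intros HK. pose proof (kk_coef_ge1 K i HK).
  unfold norm3, kk, scal3, zeta, dot3.
  set (a := 2 ^ (i - 1) * INR K) in *.
  replace (a * 1 * (a * 1) + a * 0 * (a * 0) + a * 0 * (a * 0)) with (a * a) by ring.
  apply sqrt_square. lra.
Qed.

Lemma norm3_kk' (K i : nat) : norm3 (kk' K i) = sqrt ((2 ^ (i - 1) * INR K)^2 + 1).
Proof. unfold norm3, kk', kk, add3, scal3, zeta, eta, dot3. f_equal. ring. Qed.

Lemma kk_lacunary (K i : nat) : (1 <= K)%nat -> (1 <= i)%nat ->
  sqrt 2 * norm3 (kk K i) <= norm3 (kk K (S i)).
Proof.
  intros HK Hi. rewrite !norm3_kk, kk_coef_S by assumption.
  pose proof (kk_coef_ge1 K i HK).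
  assert (sqrt 2 <= 2).
  { rewrite <- (sqrt_square 2) at 2 by lra. apply sqrt_le_1_alt. lra. }
  apply Rmult_le_compat_r; lra.
Qed.

(* (2a)^2 + 1 >= 2 (a^2 + 1) as soon as a >= 1. *)
Lemma kk'_lacunary (K i : nat) : (1 <= K)%nat -> (1 <= i)%nat ->
  sqrt 2 * norm3 (kk' K i) <= norm3 (kk' K (S i)).
Proof.
  intros HK Hi. rewrite !norm3_kk', kk_coef_S by assumption.
  pose proof (kk_coef_ge1 K i HK).
  rewrite <- sqrt_mult by nra. apply sqrt_le_1_alt. nra.
Qed.

Theorem lemma4p3 :
  forall (alpha beta1 beta2 theta1 theta2 : R),
    0 < alpha -> 0 < beta1 -> 0 < beta2 -> 0 < theta1 -> 0 < theta2 ->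
    exists C : R, 0 < C /\
      forall (r K : nat), (1 <= r)%nat -> (1 <= K)%nat ->
      forall t : R, 0 < t ->
      forall x : vec3,
        norm3 (eval_cos_sum (frac_heat alpha t (u0 r K beta1 theta1)) x)
          <= C * Rpower (INR r) (- beta1) * Rpower t (- (theta1 / (2 * alpha)))
        /\
        norm3 (eval_cos_sum (frac_heat alpha t (b0 r K beta2 theta2)) x)
          <= C * Rpower (INR r) (- beta2) * Rpower t (- (theta2 / (2 * alpha))).
Proof.
  intros al b1 b2 th1 th2 Hal Hb1 Hb2 Hth1 Hth2.
  pose proof (heat_lacunary_const_pos al th1 _ sqrt2_gt1 Hth1).
  pose proof (heat_lacunary_const_pos al th2 _ sqrt2_gt1 Hth2).
  exists (heat_lacunary_const al th1 (sqrt 2) + heat_lacunary_const al th2 (sqrt 2)).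
  split; [lra|].
  intros r K Hr HK t Ht x.
  pose proof (Rpower_pos (INR r) (- b1)). pose proof (Rpower_pos (INR r) (- b2)).
  pose proof (Rpower_pos t (- (th1 / (2 * al)))).
  pose proof (Rpower_pos t (- (th2 / (2 * al)))).
  split.
  - eapply Rle_trans.
    + apply (frac_heat_lacunary_le _ _ (sqrt 2)); try lra; [apply sqrt2_gt1 | |].
      * intros i Hi. rewrite norm3_kk by assumption. pose proof (kk_coef_ge1 K i HK). lra.
      * intros i Hi. now apply kk_lacunary.
    + rewrite norm3_vv, Rmult_1_r.
      apply Rmult_le_compat_r; [lra|]. apply Rmult_le_compat_r; lra.
  - eapply Rle_trans.
    + apply (frac_heat_lacunary_le _ _ (sqrt 2)); try lra; [apply sqrt2_gt1 | |].
      * intros i Hi. rewrite norm3_kk'. apply sqrt_lt_R0.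
        pose proof (kk_coef_ge1 K i HK). nra.
      * intros i Hi. now apply kk'_lacunary.
    + rewrite norm3_vv', Rmult_1_r.
      apply Rmult_le_compat_r; [lra|]. apply Rmult_le_compat_r; lra.
Qed.
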